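(* For every $n\in\mathbb N$, the invariant $c_n$ of ordered virtual tangles is a GPV finite type invariant of degree $n$.
   Context: An $n$-tangle ($n\ge 1$) is a collection of $n$ disjoint oriented intervals (''strings'') and finitely many oriented circles properly embedded in the 3-ball with string endpoints at prescribed boundary points; virtual tangle diagrams may contain, besides classical (real) crossings, virtual crossings (no over/under information), and virtual tangles are such diagrams modulo classical and virtual Reidemeister moves. For a string, its source is its input and its target its output. A tangle with $n$ strings is ordered if its $2n$ endpoints are numbered by integers $j_1<\dots<j_{2n}$ (up to monotone relabeling) so that every input receives some $j_{2k-1}$ and every output some $j_{2k}$; the ordering is coherent if for each $k$ the string with input $j_{2k-1}$ has output $j_{2k}$. For an ordered tangle diagram $D$: a state $S$ is a set of real crossings; $D(S)$ is obtained by smoothing each crossing of $S$ respecting orientations and inherits the endpoint numbering. $S$ is coherent if $D(S)$ has no closed components and its ordering is coherent. For coherent $S$, traverse $D(S)$ along the string from $j_1$ to $j_2$, then the string from $j_3$ to $j_4$, etc.; the neighborhood of each smoothed crossing is passed twice, and $S$ is descending if for each crossing of $S$ its neighborhood is first entered along the former overpass. $\operatorname{sign}(S)$ is the product of local writhes of the crossings of $S$. Define $c_n(D)=\sum\operatorname{sign}(S)$ over descending states with $n$ crossings; it is an invariant of ordered virtual tangles. GPV finite type. Given a virtual tangle diagram $D$ with $m$ marked, ordered real crossings $d_1,\dots,d_m$ and $I=(i_1,\dots,i_m)\in\{0,1\}^m$, let $D_I$ be obtained from $D$ by turning each $d_k$ with $i_k=1$ into a virtual crossing, and $|I|=\sum_k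 i_k$. An invariant $v$ is of GPV degree less than $m$ if $\sum_{I\in\{0,1\}^m}(-1)^{|I|}v(D_I)=0$ for all such $D$ and choices of crossings. $v$ is of GPV degree $n$ if it is of degree less than $n+1$ but not of degree less than $n$. *)

From mathcomp Require Import all_boot all_order all_algebra.
Set Implicit Arguments. Unset Strict Implicit. Unset Printing Implicit Defensive.
Import Order.TTheory GRing.Theory Num.Theory.

(* Points of a diagram with [k] strings and [na] crossings:
   - inl (inl i) : the source (input) of string i; its endpoint label is 2i
                   (i.e. j_{2i+1} in the paper's 1-based numbering);
   - inl (inr j) : the output endpoint with label 2j+1 (j_{2j+2});
   - inr (a, true)  : the passage of the curve through crossing a along the
                      overpass (for a virtual crossing: along one branch);
   - inr (a, false) : the passage through crossing a along the underpass. *)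
Notation node k na := ('I_k + 'I_k + 'I_na * bool)%type.

Definition is_start k na (x : node k na) :=
  if x is inl (inl _) then true else false.
Definition is_end k na (x : node k na) :=
  if x is inl (inr _) then true else false.

(* [nxt x] is the next point met when following the oriented curve from x;
   output endpoints have no successor, inputs have no predecessor and every
   other point has exactly one successor and one predecessor. *)
Definition wf_next k na (nxt : node k na -> option (node k na)) :=
  [/\ forall x, (nxt x == None) = is_end x,
      forall x y, nxt x = Some y -> ~~ is_start y
    & forall x y, nxt x != None -> nxt x = nxt y -> x = y].

(* A virtual tangle diagram (Gauss diagram form):
   [gk] strings (with the endpoint ordering encoded as above), [gna]
   crossings of which those in [greal] are real (the others virtual),
   local writhes [gsign] (true = +1, false = -1) of real crossings,
   and [gcirc] closed components carrying no crossing at all. *)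
Record GD := mkGD {
  gk : nat;
  gna : nat;
  gcirc : nat;
  gnext : node gk gna -> option (node gk gna);
  gsign : 'I_gna -> bool;
  greal : {set 'I_gna};
  gk_pos : 0 < gk;
  gnext_wf : wf_next gnext }.

(* successor function of D(S): smoothing crossing a (respecting orientations)
   connects the incoming overpass to the outgoing underpass and vice versa. *)
Definition smooth_next (D : GD) (S : {set 'I_(gna D)})
  (x : node (gk D) (gna D)) : option (node (gk D) (gna D)) :=
  match x with
  | inr (a, b) => if a \in S then @gnext D (inr (a, ~~ b)) else @gnext D x
  | _ => @gnext D x
  end.

(* the walk from point x (at most #|node| points, which suffices for paths) *)
Definition walk k na (f : node k na -> option (node k na)) (x : node k na)
  : seq (node k na) :=
  pmap id (traject (obind f) (Some x) #|{: node k na}|).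

(* traversal of D(S): string from j_1 to j_2, then from j_3 to j_4, ... *)
Definition traversal (D : GD) (S : {set 'I_(gna D)}) : seq (node (gk D) (gna D)) :=
  flatten [seq walk (smooth_next S) (inl (inl i)) | i <- enum 'I_(gk D)].

(* S coherent: D(S) has no closed components, and its ordering is coherent *)
Definition coherent (D : GD) (S : {set 'I_(gna D)}) : bool :=
  [&& gcirc D == 0,
      [forall x : node (gk D) (gna D), x \in traversal S]
    & [forall i : 'I_(gk D),
         last (inl (inl i)) (walk (smooth_next S) (inl (inl i)))
           == inl (inr i)]].

Definition descending (D : GD) (S : {set 'I_(gna D)}) : bool :=
  [forall a in S,
     index (inr (a, true)) (traversal S) < index (inr (a, false)) (traversal S)].

Definition state_sign (D : GD) (S : {set 'I_(gna D)}) : int :=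
  \prod_(a in S) (if @gsign D a then 1 else -1)%R.

Definition c_inv (n : nat) (D : GD) : int :=
  (\sum_(S : {set 'I_(gna D)} |
          [&& S \subset @greal D, #|S| == n, coherent S & descending S])
     state_sign S)%R.

Definition virt (D : GD) (T : {set 'I_(gna D)}) : GD :=
  @mkGD (gk D) (gna D) (gcirc D) (@gnext D) (@gsign D) (@greal D :\: T)
        (@gk_pos D) (@gnext_wf D).

Definition gpv_deg_lt (v : GD -> int) (p : nat) : Prop :=
  forall (D : GD) (d : 'I_p -> 'I_(gna D)),
    injective d -> (forall i, d i \in @greal D) ->
    (\sum_(I : {ffun 'I_p -> bool})
        (-1) ^+ #|[set i | I i]| * v (virt [set d i | i in [set j | I j]]))%R
    = 0%R.

Definition gpv_degree (v : GD -> int) (n : nat) : Prop :=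
  gpv_deg_lt v n.+1 /\ ~ gpv_deg_lt v n.

From mathcomp Require Import all_boot all_order all_algebra zify.
Set Implicit Arguments. Unset Strict Implicit. Unset Printing Implicit Defensive.
Import Order.TTheory GRing.Theory Num.Theory.
Local Open Scope ring_scope.

(* A state of D_T is a state of D avoiding T, so by inclusion-exclusion the
   alternating sum over the 2^p virtualisations of the marked crossings
   d 0, ..., d (p-1) counts exactly the states of c_n(D) containing all of them.
   For p = n+1 there is no such state of size n.  For p = n, the diagram with n
   positive crossings between disjoint pairs of strings, the over-string of each
   pair coming first, has the single such state S = all crossings, which is
   coherent and descending; so the alternating sum is 1. *)

Lemma disjoint_imsetP (aT rT : finType) (f : aT -> rT) (A : {set aT}) (S : {set rT}) :
  reflect {in A, forall i, f i \notin S} [disjoint S & f @: A].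
Proof.
apply: (iffP idP) => [dis i iA|fAS].
  by apply: contraTN dis => fiS; apply/pred0Pn; exists (f i); rewrite /= fiS imset_f.
rewrite disjoint_sym disjoint_subset; apply/subsetP => _ /imsetP[i iA ->].
by rewrite inE fAS.
Qed.

Lemma sum_alternating_disjoint (R : comPzRingType) (T : finType) p
    (d : 'I_p -> T) (S : {set T}) :
  \sum_(I : {ffun 'I_p -> bool} | [disjoint S & d @: [set i | I i]])
     (-1) ^+ #|[set i | I i]| = [forall i, d i \in S]%:R :> R.
Proof.
(* Each summand factors over the marks: the sum is \prod_i (g i true + g i false). *)
pose g i (b : bool) : R := if b then (if d i \in S then 0 else -1) else 1.
have termE (I : {ffun 'I_p -> bool}) :
    (if [disjoint S & d @: [set i | I i]] then (-1) ^+ #|[set i | I i]| else 0)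
    = \prod_i g i (I i).
  case: (pickP (fun i => I i && (d i \in S))) => [i /andP[Ii dS] | noIS].
    rewrite (bigD1 i) //= /g Ii dS mul0r ifN //.
    by apply/disjoint_imsetP => /(_ i); rewrite inE Ii dS => /(_ isT).
  rewrite ifT; last first.
    apply/disjoint_imsetP => i; rewrite inE => Ii.
    by move: (noIS i); rewrite Ii => /negbT.
  rewrite -prodr_const big_mkcond /=; apply: eq_bigr => i _; rewrite inE /g.
  by case: ifP => // Ii; move: (noIS i); rewrite Ii /= => ->.
rewrite big_mkcond (eq_bigr _ (fun I _ => termE I)) -bigA_distr_bigA /=.
case: (boolP [forall i, d i \in S]) => [/forallP dS | /forallPn[i dSn]].
  by apply: big1 => i _; rewrite big_bool /= /g dS add0r.
by rewrite (bigD1 i) //= big_bool /= /g (negbTE dSn) addNr mul0r.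
Qed.

Definition c_state n (D : GD) (S : {set 'I_(gna D)}) : bool :=
  [&& S \subset greal D, #|S| == n, coherent S & descending S].

Lemma c_inv_virt n (D : GD) (T : {set 'I_(gna D)}) :
  c_inv n (virt T) =
  \sum_(S | c_state n S) (if [disjoint S & T] then state_sign S else 0).
Proof.
rewrite /c_inv big_mkcond [RHS]big_mkcond; apply: eq_bigr => S _ /=.
rewrite /c_state subsetD.
by case: [disjoint S & T]; rewrite ?andbT ?andbF //=; case: ifP.
Qed.

Lemma c_inv_alternating_sum n (D : GD) p (d : 'I_p -> 'I_(gna D)) :
  \sum_(I : {ffun 'I_p -> bool})
     (-1) ^+ #|[set i | I i]| * c_inv n (virt [set d i | i in [set j | I j]])
  = \sum_(S | c_state n S && [forall i, d i \in S]) state_sign S.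
Proof.
under eq_bigr => I _ do rewrite c_inv_virt mulr_sumr.
rewrite exchange_big [RHS]big_mkcondr /=; apply: eq_bigr => S _.
rewrite -mulrb -mulr_natl -sum_alternating_disjoint mulr_suml [RHS]big_mkcond /=.
apply: eq_bigr => I _.
by case: ifP; rewrite ?mulr0.
Qed.

Lemma c_inv_deg_lt n : gpv_deg_lt (c_inv n) n.+1.
Proof.
move=> D d d_inj _; rewrite c_inv_alternating_sum big_pred0 // => S.
apply/negP => /andP[/and4P[_ /eqP cardS _ _] /forallP dS].
have : (#|[set d i | i : 'I_n.+1]| <= #|S|)%N.
  by apply: subset_leq_card; apply/subsetP => _ /imsetP[i _ ->]; apply: dS.
by rewrite card_imset // card_ord cardS ltnn.
Qed.

Lemma pmap_traject_Some (T : Type) (f : T -> option T) x m :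
  pmap id (traject (obind f) (Some x) m.+1) =
  x :: pmap id (traject (obind f) (f x) m).
Proof. by []. Qed.

Lemma pmap_traject_None (T : Type) (f : T -> option T) m :
  pmap id (traject (obind f) None m) = [::].
Proof. by elim: m. Qed.

Section PairCrossings.
Variable n : nat.
Local Open Scope nat_scope.
Local Notation point := (node n.*2.+1 n).

(* Strings 2a and 2a+1 (a < n) cross once, at crossing a, the string entering
   at input 2a passing over and leaving at output 2a+1; string 2n is a bare arc,
   needed so that there is a string even for n = 0. *)
Definition pairs_next (x : point) : option point :=
  match x with
  | inl (inl j) =>
      if insub j./2 is Some a then Some (inr (a, ~~ odd j)) else Some (inl (inr j))
  | inl (inr _) => None
  | inr (a, b) => Some (inl (inr (inord (b + a.*2))))
  end.

Definition pairs_prev (y : point) : option point :=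
  match y with
  | inl (inl _) => None
  | inl (inr j) =>
      if insub j./2 is Some a then Some (inr (a, odd j)) else Some (inl (inl j))
  | inr (a, b) => Some (inl (inl (inord (~~ b + a.*2))))
  end.

Lemma odd_bit_double (b : bool) m : odd (b + m.*2) = b.
Proof. by rewrite oddD odd_double addbF; case: b. Qed.

Lemma val_inord_pair (a : 'I_n) (b : bool) :
  (inord (b + a.*2) : 'I_n.*2.+1) = b + a.*2 :> nat.
Proof. by apply: inordK; have := ltn_ord a; case: b => /=; lia. Qed.

Lemma insub_half_pair (a : 'I_n) (b : bool) :
  insub (inord (b + a.*2) : 'I_n.*2.+1)./2 = Some a.
Proof. by rewrite val_inord_pair half_bit_double valK. Qed.

Lemma pairs_nextK x y : pairs_next x = Some y -> pairs_prev y = Some x.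
Proof.
case: x => [[j|j]|[a b]] //=.
- case: insubP => [a _ ha|/negbTE hj] [<-] /=; last by rewrite insubF.
  congr (Some (inl (inl _))); apply: val_inj.
  by rewrite negbK ha odd_double_half inord_val.
- by move=> [<-] /=; rewrite insub_half_pair val_inord_pair odd_bit_double.
Qed.

Lemma pairs_next_wf : wf_next pairs_next.
Proof.
split.
- by case=> [[j|j]|[a b]] //=; case: insubP.
- by move=> x [[j|j]|[a b]] /pairs_nextK.
- move=> x y; case exz: (pairs_next x) => [z|] // _ eyz.
  by move: exz eyz => /pairs_nextK pz /esym /pairs_nextK; rewrite pz => -[].
Qed.

Definition pairs_diagram : GD :=
  @mkGD n.*2.+1 n 0 pairs_next (fun _ => true) setT (ltn0Sn _) pairs_next_wf.

Definition pairs_strand (j : 'I_n.*2.+1) : seq point :=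
  if insub j./2 is Some a then [:: inl (inl j); inr (a, ~~ odd j); inl (inr j)]
  else [:: inl (inl j); inl (inr j)].

Lemma smooth_all_cross (a : 'I_n) (b : bool) :
  smooth_next (D := pairs_diagram) setT (inr (a, b)) =
  Some (inl (inr (inord (~~ b + a.*2)))).
Proof. by rewrite /= in_setT. Qed.

Lemma walk_smooth_all (j : 'I_n.*2.+1) :
  walk (smooth_next (D := pairs_diagram) setT) (inl (inl j)) = pairs_strand j.
Proof.
rewrite /walk /pairs_strand !card_sum card_prod !card_ord card_bool.
have -> : n.*2.+1 + n.*2.+1 + n * 2 = (n.*2 + n.*2 + n * 2).+2 by lia.
rewrite pmap_traject_Some [smooth_next _ _]/=.
case: insubP => [a _ ha|_].
  have -> : n.*2 + n.*2 + n * 2 = (n.*2 + n.*2 + n * 2).-1.+1.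
    by have := ltn_ord a; lia.
  rewrite pmap_traject_Some smooth_all_cross pmap_traject_Some /= pmap_traject_None.
  by rewrite negbK ha odd_double_half inord_val.
by rewrite pmap_traject_Some pmap_traject_None.
Qed.

Lemma traversal_smooth_all :
  traversal (D := pairs_diagram) setT =
  flatten [seq pairs_strand j | j <- enum 'I_n.*2.+1].
Proof. by congr flatten; apply: eq_map => j; rewrite walk_smooth_all. Qed.

Lemma mem_pairs_strand_cross (a : 'I_n) (b : bool) (j : 'I_n.*2.+1) :
  (inr (a, b) \in pairs_strand j) = (j == ~~ b + a.*2 :> nat).
Proof.
rewrite /pairs_strand.
case: insubP => [a' _ ha'|j_bare]; rewrite !inE -!sum_eqE /= ?orbF.
  apply/eqP/eqP => [[-> ->]|ej]; first by rewrite negbK ha' odd_double_half.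
  have -> : a' = a by apply: val_inj; rewrite ha' ej half_bit_double.
  by rewrite ej odd_bit_double negbK.
symmetry; apply/negbTE; apply: contra j_bare => /eqP->.
by rewrite half_bit_double ltn_ord.
Qed.

Lemma mem_take_enum_ord m (j : 'I_m) k : (j \in take k (enum 'I_m)) = (j < k).
Proof.
rewrite -(mem_map val_inj) map_take val_enum_ord take_iota mem_iota add0n.
by rewrite leq_min ltn_ord andbT.
Qed.

Lemma coherent_smooth_all : coherent (D := pairs_diagram) setT.
Proof.
apply/and3P; split => //.
  apply/forallP => x; rewrite traversal_smooth_all; apply/flatten_mapP.
  case: x => [[j|j]|[a b]].
  - exists j; rewrite ?mem_enum // /pairs_strand.
    by case: insubP => *; exact: mem_head.
  - exists j; rewrite ?mem_enum // /pairs_strand.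
    by case: insubP => *; rewrite !inE eqxx ?orbT.
  - exists (inord (~~ b + a.*2)); rewrite ?mem_enum // mem_pairs_strand_cross.
    by rewrite val_inord_pair.
by apply/forallP => j; rewrite walk_smooth_all /pairs_strand; case: insubP.
Qed.

Lemma descending_smooth_all : descending (D := pairs_diagram) setT.
Proof.
apply/forall_inP => a _; rewrite traversal_smooth_all.
rewrite -(cat_take_drop a.*2.+1 (enum 'I_n.*2.+1)) map_cat flatten_cat.
set A := flatten _.
have overA : inr (a, true) \in A.
  apply/flatten_mapP; exists (inord (~~ true + a.*2)).
    by rewrite mem_take_enum_ord val_inord_pair.
  by rewrite mem_pairs_strand_cross val_inord_pair.
have underNA : inr (a, false) \notin A.
  apply/flatten_mapP => -[j]; rewrite mem_take_enum_ord mem_pairs_strand_cross.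
  by move=> lt_j /eqP ej; move: lt_j; rewrite ej ltnn.
by rewrite !index_cat overA (negbTE underNA) ltn_addr // index_mem.
Qed.

Lemma c_state_pairs_setT : c_state n (D := pairs_diagram) setT.
Proof.
rewrite /c_state subsetT cardsT card_ord eqxx.
by rewrite coherent_smooth_all descending_smooth_all.
Qed.
End PairCrossings.

Theorem mainTheorem5 (n : nat) : gpv_degree (c_inv n) n.
Proof.
split; first exact: c_inv_deg_lt.
move=> deg_lt_n.
have := deg_lt_n (pairs_diagram n) id (@inj_id _) (fun a => in_setT a).
rewrite c_inv_alternating_sum (big_pred1 setT) => [|S].
  by rewrite /state_sign big1.
apply/andP/eqP => [[_ /forallP allS]|->].
  by apply/setP => a; rewrite in_setT allS.
by split; [exact: c_state_pairs_setT | apply/forallP => a; rewrite in_setT].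
Qed.
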